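(* Let $n\ge 0$ and $-1\le i,j\le n$ be integers, and let $p\in\Gamma_n$ be written as a concatenation $p=c\,q_2\,b\,q_1\,a$ of paths with $q_1\in\Gamma_i$ and $q_2\in\Gamma_j$. Then $i+j\le n-1$.
   Context: Let $\Bbbk$ be a field, $Q=(Q_0,Q_1,s,t)$ a finite quiver, and $A=\Bbbk Q/I$ a finite-dimensional monomial algebra, i.e. $I$ is an ideal generated by paths of length at least $2$. Paths are written from right to left: a path is $p=\alpha_n\cdots\alpha_1$ with arrows $\alpha_i$ and $t(\alpha_i)=s(\alpha_{i+1})$; vertices are the paths of length $0$; $qp$ denotes concatenation when $t(p)=s(q)$. Let $\mathcal B$ be the set of paths not lying in $I$. A suffix of a path $p$ is a path $q$ with $p=qa$; a prefix is a path $q$ with $p=bq$; proper means $q\ne p$. For $n\ge -1$, a left $n$-ambiguity is a path $p$ with a decomposition $p=u_{-1}u_0u_1\cdots u_n$ such that $u_{-1}\in Q_0$, $u_0\in Q_1$, $u_i\in\mathcal B$ for all $i$, and for every $0\le i\le n-1$, $u_iu_{i+1}\in I$ while no proper suffix of $u_iu_{i+1}$ lies in $I$. A right $n$-ambiguity is a path with a decomposition $p=v_n\cdots v_0v_{-1}$ with $v_{-1}\in Q_0$, $v_0\in Q_1$, $v_i\in\mathcal B$, and for $0\le i\le n-1$, $v_{i+1}v_i\in I$ while no proper prefix of $v_{i+1}v_i$ lies in $I$. A path is a left $n$-ambiguity iff it is a right $n$-ambiguity; such paths are called $n$-ambiguities, and $\Gamma_n$ denotes their set. *)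

From mathcomp Require Import all_boot all_order all_algebra.
Set Implicit Arguments. Unset Strict Implicit. Unset Printing Implicit Defensive.

(* A path alpha_n ... alpha_1
   (written right to left, alpha_1 traversed first) is stored as its source
   vertex together with the list [:: alpha_1; ...; alpha_n] of its arrows in
   order of traversal.  Vertices are the paths with no arrows. *)
Record qpath (V E : Type) := QPath { src : V; arrs : seq E }.

Section Quiver.
Context {V E : finType} (s t : E -> V).

Definition qlen (p : qpath V E) : nat := size (arrs p).

Definition tgt (p : qpath V E) : V := last (src p) (map t (arrs p)).

Definition valid (p : qpath V E) : bool :=
  match arrs p with
  | [::] => true
  | a :: l => (s a == src p) && path (fun x y => t x == s y) a l
  end.

(* qcomp q p  is the concatenation  q p  (p first, then q); it is meant to be
   used only when t(p) = s(q). *)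
Definition qcomp (q p : qpath V E) : qpath V E :=
  QPath (src p) (arrs p ++ arrs q).

Definition composable (q p : qpath V E) : bool := tgt p == src q.

(* The monomial ideal I generated by a set R of paths (of length >= 2):
   a path lies in I iff it is of the form  b r a  with r in R. *)
Variable R : qpath V E -> Prop.

Definition inI (p : qpath V E) : Prop :=
  exists r a b, R r /\ valid a /\ valid b /\ composable r a /\
                composable b r /\ p = qcomp b (qcomp r a).

Definition inB (p : qpath V E) : Prop := valid p /\ ~ inI p.

Definition proper_suffix (q p : qpath V E) : Prop :=
  q <> p /\ exists a, valid a /\ valid q /\ composable q a /\ p = qcomp q a.

Definition proper_prefix (q p : qpath V E) : Prop :=
  q <> p /\ exists b, valid b /\ valid q /\ composable b q /\ p = qcomp b q.

Fixpoint prodL (e : qpath V E) (us : seq (qpath V E)) : qpath V E :=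
  match us with
  | [::] => e
  | u :: us' => qcomp e (prodL u us')
  end.

Fixpoint chainL (e : qpath V E) (us : seq (qpath V E)) : bool :=
  match us with
  | [::] => true
  | u :: us' => composable e (prodL u us') && chainL u us'
  end.

Fixpoint prodR (e : qpath V E) (vs : seq (qpath V E)) : qpath V E :=
  match vs with
  | [::] => e
  | v :: vs' => prodR (qcomp v e) vs'
  end.

Fixpoint chainR (e : qpath V E) (vs : seq (qpath V E)) : bool :=
  match vs with
  | [::] => true
  | v :: vs' => composable v e && chainR (qcomp v e) vs'
  end.


(* Left (N-1)-ambiguity: p = u_{-1} u_0 u_1 ... u_{N-1}, where
   e = u_{-1} and us = [:: u_0; ...; u_{N-1}]. *)
Definition leftAmb (N : nat) (p : qpath V E) : Prop :=
  exists (e : qpath V E) (us : seq (qpath V E)),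
    size us = N /\ chainL e us /\ p = prodL e us /\
    valid e /\ qlen e = 0 /\
    (0 < N -> qlen (nth e us 0) = 1) /\
    (forall k, k < N -> inB (nth e us k)) /\
    (forall k, k.+1 < N ->
       inI (qcomp (nth e us k) (nth e us k.+1)) /\
       forall q, proper_suffix q (qcomp (nth e us k) (nth e us k.+1)) -> ~ inI q).

(* Right (N-1)-ambiguity: p = v_{N-1} ... v_0 v_{-1}, where
   e = v_{-1} and vs = [:: v_0; ...; v_{N-1}]. *)
Definition rightAmb (N : nat) (p : qpath V E) : Prop :=
  exists (e : qpath V E) (vs : seq (qpath V E)),
    size vs = N /\ chainR e vs /\ p = prodR e vs /\
    valid e /\ qlen e = 0 /\
    (0 < N -> qlen (nth e vs 0) = 1) /\
    (forall k, k < N -> inB (nth e vs k)) /\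
    (forall k, k.+1 < N ->
       inI (qcomp (nth e vs k.+1) (nth e vs k)) /\
       forall q, proper_prefix q (qcomp (nth e vs k.+1) (nth e vs k)) -> ~ inI q).

(* Gamma_n (n >= -1, an integer): the n-ambiguities, i.e. paths that are both
   left and right n-ambiguities (the two notions coincide). *)
Definition Gamma (n : int) (p : qpath V E) : Prop :=
  exists N : nat, n = (N%:Z - 1)%R /\ leftAmb N p /\ rightAmb N p.

(* Standing hypotheses: A = kQ/I is a finite-dimensional monomial algebra,
   I generated by (valid) paths of length >= 2. *)
Definition monomial_fd : Prop :=
  (forall r, R r -> valid r /\ 2 <= qlen r) /\
  (exists M : nat, forall p, valid p -> M <= qlen p -> inI p).

End Quiver.

From mathcomp Require Import all_boot all_order all_algebra.
From mathcomp Require Import zify.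
Set Implicit Arguments. Unset Strict Implicit. Unset Printing Implicit Defensive.

(* Read a path as the word of its arrows, in the order they are traversed.  A left
   (N-1)-ambiguity p = u_{-1} u_0 ... u_{N-1} becomes a sequence of cuts
   |p| = A 0 > A 1 > ... > A N = 0, the factor u_m occupying the positions
   [A (m+1), A m), and its defining properties make it the greedy chain of relations:
   the relation in u_m u_{m+1} starts exactly at A (m+2), no relation starting later
   ends by A m, and no relation fits between two consecutive cuts.  Hence any other
   chain of relations, each starting at D (k+2) and ending by D k, that starts below a
   cut of p stays below the cuts of p, two steps at a time.  If q2 b q1 a is a factor
   of p, the cuts of q2 (j+1 of them) form such a chain starting at the top of p, so q2
   ends below A (j+1); the chain of q1 starts below that point and so fits into the
   remaining cuts: (i+1) + (j+1) <= n+1. *)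

Section Slices.
Variable T : Type.

Definition slice (w : seq T) x y := drop x (take y w).

Lemma size_slice w x y : y <= size w -> size (slice w x y) = y - x.
Proof. by move=> le; rewrite size_drop size_take_min (minn_idPl le). Qed.

Lemma slice_slice w lo hi x y : lo + y <= hi ->
  slice (slice w lo hi) x y = slice w (lo + x) (lo + y).
Proof.
by move=> le; rewrite /slice take_drop take_takel addnC // drop_drop addnC.
Qed.

Lemma slice_cat x y z w : x <= y <= z ->
  slice w x y ++ slice w y z = slice w x z.
Proof.
case/andP=> xy yz; rewrite /slice -(take_takel w yz).
by rewrite -[RHS](cat_take_drop (y - x)) take_drop drop_drop subnK.
Qed.

Lemma slice_cat3 (l1 l2 l3 : seq T) :
  slice (l1 ++ l2 ++ l3) (size l1) (size l1 + size l2) = l2.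
Proof. by rewrite /slice takeD take_size_cat // !drop_size_cat // take_size_cat. Qed.

Lemma slice_full w : slice w 0 (size w) = w.
Proof. by rewrite /slice drop0 take_size. Qed.

End Slices.

Section Cuts.
Variable occ : nat -> nat -> Prop.
Hypothesis occ_lt : forall x y, occ x y -> x < y.

Definition chained N (D : nat -> nat) :=
  forall m, m + 2 <= N -> exists2 y, occ (D (m + 2)) y & y <= D m.

(* With [occ x y] read as "a relation occupies the positions [x, y) of a word",
   [ambiguity_cuts N A] is the shape of a left (N-1)-ambiguity u_{-1} u_0 ... u_{N-1}:
   u_m occupies [A m.+1, A m), u_0 is an arrow, u_m u_{m+1} starts with a relation and
   contains none starting later, and u_m contains no relation. *)
Record ambiguity_cuts N (A : nat -> nat) : Prop := {
  cuts_last : A N = 0;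
  cuts_first : 0 < N -> A 1 + 1 = A 0;
  cuts_chained : chained N A;
  cuts_minimal : forall m x y, m + 2 <= N -> occ x y -> A (m + 2) < x -> y <= A m -> False;
  cuts_piece : forall m x y, m < N -> occ x y -> A m.+1 <= x -> y <= A m -> False }.

Variables (N : nat) (A : nat -> nat).
Hypothesis A_cuts : ambiguity_cuts N A.

Lemma cuts_decreasing m : m < N -> A m.+1 < A m.
Proof.
case: m => [N0|m mN]; first by have := cuts_first A_cuts N0; lia.
have m2N : m + 2 <= N by rewrite addn2.
have [y oc yA] := cuts_chained A_cuts m2N; rewrite addn2 in oc.
rewrite ltnNge; apply/negP => le.
exact: (cuts_piece A_cuts (ltnW mN) oc le yA).
Qed.

(* The relation ending by D b <= A a starts at or below A (a + 2) by minimality;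
   if fewer than two cuts were left it would lie inside the last factor. *)
Lemma cuts_dominate_step Nd D a b : chained Nd D -> b + 2 <= Nd -> a <= N ->
  D b <= A a -> a + 2 <= N /\ D (b + 2) <= A (a + 2).
Proof.
move=> Dch bN aN DA; have [y oc yD] := Dch b bN; have yA := leq_trans yD DA.
case: (leqP (a + 2) N) => aN2.
  split=> //; rewrite leqNgt; apply/negP => lt.
  exact: (cuts_minimal A_cuts aN2 oc lt yA).
exfalso; have xy := occ_lt oc.
have [ea|ea] : a = N \/ a.+1 = N by lia.
  by move: yA; rewrite ea (cuts_last A_cuts); lia.
have aN1 : a < N by rewrite -ea.
by apply: (cuts_piece A_cuts aN1 oc _ yA); rewrite ea (cuts_last A_cuts).
Qed.

Lemma cuts_dominate_iter Nd D k a b : chained Nd D -> b + k.*2 <= Nd -> a <= N ->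
  D b <= A a -> a + k.*2 <= N /\ D (b + k.*2) <= A (a + k.*2).
Proof.
move=> Dch; elim: k a b => [|k IH] a b; first by rewrite !addn0.
have e x : x + k.+1.*2 = x + 2 + k.*2 by lia.
rewrite !e => bN aN DA.
have bN2 : b + 2 <= Nd by lia.
have [aN2 DA2] := cuts_dominate_step Dch bN2 aN DA.
exact: IH.
Qed.

Lemma cuts_dominate Nd D : chained Nd D -> 0 < N ->
  D 0 <= A 0 -> (0 < Nd -> D 1 <= A 1) -> Nd <= N /\ D Nd <= A Nd.
Proof.
move=> Dch N0 DA0 DA1; have eNd := odd_double_half Nd.
have oN : odd Nd <= N by case: (odd Nd).
have oDA : D (odd Nd) <= A (odd Nd).
  by case: (odd Nd) eNd => //= eNd; apply: DA1; rewrite -eNd.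
by rewrite -eNd; apply: (cuts_dominate_iter Dch); rewrite ?eNd.
Qed.

(* Cuts are compared every other step only; an odd leftover step needs D to decrease. *)
Lemma cuts_dominate_decreasing Nd D a : chained Nd D ->
  (forall m, m < Nd -> D m.+1 < D m) -> a <= N -> D 0 <= A a -> a + Nd <= N.
Proof.
move=> Dch Ddec aN DA; have eNd := odd_double_half Nd.
have hNd : 0 + Nd./2.*2 <= Nd by rewrite -{2}eNd leq_addl.
have [aN' DA'] := cuts_dominate_iter Dch hNd aN DA.
case: (odd Nd) eNd => /= eNd; last by rewrite -eNd.
have k2Nd : Nd./2.*2 < Nd by rewrite -{2}eNd.
have := Ddec _ k2Nd; case: (ltnP (a + Nd./2.*2) N) => [|le]; first lia.
have eN : a + Nd./2.*2 = N by apply/eqP; rewrite eqn_leq aN'.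
by move: DA'; rewrite add0n eN (cuts_last A_cuts); lia.
Qed.

End Cuts.

Lemma chained_shift (occ occ' : nat -> nat -> Prop) lo N D :
  (forall x y, occ x y -> occ' (lo + x) (lo + y)) ->
  chained occ N D -> chained occ' N (fun k => lo + D k).
Proof.
move=> shift Dch m mN; have [y oc yD] := Dch m mN.
by exists (lo + y); [apply: shift | rewrite leq_add2l].
Qed.

Lemma cuts_nested (occ occ1 occ2 : nat -> nat -> Prop) N Ni Nj A B C lo1 lo2 :
  (forall x y, occ x y -> x < y) ->
  ambiguity_cuts occ N A -> ambiguity_cuts occ1 Ni B -> ambiguity_cuts occ2 Nj C ->
  (forall x y, occ1 x y -> occ (lo1 + x) (lo1 + y)) ->
  (forall x y, occ2 x y -> occ (lo2 + x) (lo2 + y)) ->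
  0 < N -> lo2 + C 0 <= A 0 -> lo1 + B 0 <= lo2 -> Ni + Nj <= N.
Proof.
move=> occ_lt Acuts Bcuts Ccuts sh1 sh2 N0 CA0 BC.
have Bch := chained_shift sh1 (cuts_chained Bcuts).
have Cch := chained_shift sh2 (cuts_chained Ccuts).
have CA1 : 0 < Nj -> lo2 + C 1 <= A 1.
  by move=> Nj0; have := cuts_first Ccuts Nj0; have := cuts_first Acuts N0; lia.
have [NjN CA] := cuts_dominate occ_lt Acuts Cch N0 CA0 CA1.
rewrite addnC; apply: (cuts_dominate_decreasing occ_lt Acuts Bch _ NjN).
- by move=> m mNi; rewrite ltn_add2l; apply: (cuts_decreasing Bcuts).
- by apply: leq_trans CA; rewrite (cuts_last Ccuts) addn0.
Qed.

Section Subpaths.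
Context {V E : finType} (s t : E -> V).
Implicit Types (X : qpath V E) (v : V) (l : seq E).

Lemma valid_cat v l1 l2 : valid s t (QPath v (l1 ++ l2)) =
  valid s t (QPath v l1) && valid s t (QPath (last v (map t l1)) l2).
Proof.
case: l1 => [|a l1] /=; first by rewrite /valid /=.
rewrite /valid /= cat_path -andbA last_map; congr (_ && (_ && _)).
by case: l2 => [|c l2] //=; rewrite eq_sym.
Qed.

Lemma valid_qcomp X Y : composable t Y X -> valid s t Y -> valid s t X ->
  valid s t (qcomp Y X).
Proof.
case: X => v l /eqP eYX vY vX.
by rewrite /qcomp valid_cat vX; move: eYX vY; rewrite /tgt => ->; case: Y.
Qed.

Lemma tgt_qcomp X Y : composable t Y X -> tgt t (qcomp Y X) = tgt t Y.
Proof. by move/eqP; rewrite /tgt /= map_cat last_cat => ->. Qed.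

Definition vtx X k := last (src X) (map t (take k (arrs X))).

Definition subpath X x y := QPath (vtx X x) (slice (arrs X) x y).

Lemma vtx_slice X x y : x <= y ->
  vtx X y = last (vtx X x) (map t (slice (arrs X) x y)).
Proof.
move=> xy; rewrite /vtx -last_cat -map_cat.
by rewrite -{1}(cat_take_drop x (take y (arrs X))) take_takel.
Qed.

Lemma valid_subpath X x y : valid s t X -> x <= y -> valid s t (subpath X x y).
Proof.
case: X => v l vX xy; rewrite /subpath /=.
have: valid s t (QPath v (take y l)).
  by move: vX; rewrite -{1}(cat_take_drop y l) valid_cat => /andP[].
by rewrite -{1}(cat_take_drop x (take y l)) valid_cat take_takel // => /andP[].
Qed.

Lemma tgt_subpath X x y : x <= y -> tgt t (subpath X x y) = vtx X y.
Proof. by move=> xy; rewrite /tgt /= (vtx_slice X xy). Qed.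

Lemma qcomp_subpath X x y z : x <= y <= z ->
  qcomp (subpath X y z) (subpath X x y) = subpath X x z.
Proof. by move=> xyz; rewrite /qcomp /subpath /= slice_cat. Qed.

Lemma subpath_full X : subpath X 0 (size (arrs X)) = X.
Proof. by case: X => v l; rewrite /subpath /vtx /= take0 slice_full. Qed.

Lemma src_slice X x y e0 : valid s t X -> x < y <= size (arrs X) ->
  s (nth e0 (slice (arrs X) x y) 0) = vtx X x.
Proof.
case: X => v l vX /andP[xy yl]; rewrite /vtx /= nth_drop addn0 nth_take //.
move: vX; rewrite -{1}(cat_take_drop x l) valid_cat (drop_nth e0) /valid /=.
  by case/andP=> _ /andP[/eqP].
by apply: leq_trans yl.
Qed.

Lemma subpath_arrs X r x y : valid s t X -> valid s t r -> 0 < size (arrs r) ->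
  arrs r = slice (arrs X) x y -> y <= size (arrs X) -> r = subpath X x y.
Proof.
case: r => v [|e l] //= vX vr _ er yX; rewrite /subpath -er; congr QPath.
have xy : x < y by have := size_slice x yX; rewrite -er /=; lia.
move: vr; rewrite /valid /= => /andP[/eqP <- _].
by rewrite -(src_slice e vX (x := x) (y := y)) ?xy // -er.
Qed.

End Subpaths.

Section Occurrences.
Context {V E : finType} (s t : E -> V) (R : qpath V E -> Prop).
Hypothesis R_valid : forall r, R r -> valid s t r.
Hypothesis R_nonempty : forall r, R r -> 0 < qlen r.
Implicit Types (X : qpath V E) (w : seq E).

Definition occurs w x y := y <= size w /\ exists2 r, R r & arrs r = slice w x y.

Lemma occurs_lt w x y : occurs w x y -> x < y.
Proof.
case=> yw [r /R_nonempty]; rewrite /qlen => r0 er.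
by move: r0; rewrite er size_slice //; lia.
Qed.

Lemma occurs_slice w lo hi x y : lo <= hi <= size w ->
  occurs (slice w lo hi) x y -> occurs w (lo + x) (lo + y) /\ lo + y <= hi.
Proof.
case/andP=> lohi hiw [yw [r Rr er]]; rewrite size_slice // in yw.
have le : lo + y <= hi by lia.
by rewrite slice_slice // in er; do !split=> //; [lia | exists r].
Qed.

Lemma slice_occurs w lo hi x y : hi <= size w ->
  occurs w x y -> lo <= x -> y <= hi -> occurs (slice w lo hi) (x - lo) (y - lo).
Proof.
move=> hiw oc lox yhi; have xy := occurs_lt oc; case: oc => yw [r Rr er].
split; first by rewrite size_slice //; lia.
by exists r; rewrite // slice_slice ?subnKC //; lia.
Qed.

Lemma inI_occurs X x y : valid s t X -> occurs (arrs X) x y -> inI s t R X.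
Proof.
move=> vX oc; have xy := occurs_lt oc; case: oc => yX [r Rr er].
move: (Rr); rewrite (subpath_arrs vX (R_valid Rr) (R_nonempty Rr) er yX) => Rsub.
exists (subpath t X x y), (subpath t X 0 x), (subpath t X y (size (arrs X))).
do !split; rewrite ?valid_subpath ?/composable ?tgt_subpath //; try lia.
by rewrite !qcomp_subpath ?subpath_full //; lia.
Qed.

Lemma occurs_inI X : inI s t R X -> exists x y, occurs (arrs X) x y.
Proof.
case=> r [a [b [Rr [_ [_ [_ [_ ->]]]]]]].
exists (size (arrs a)), (size (arrs a) + size (arrs r)).
split; first by rewrite /= !size_cat; lia.
by exists r; rewrite //= -catA slice_cat3.
Qed.

Lemma inB_occurs X x y : inB s t R X -> ~ occurs (arrs X) x y.
Proof. by case=> vX nI /(inI_occurs vX). Qed.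

Lemma occurs_cat3 w1 w2 w3 x y :
  occurs w2 x y -> occurs (w1 ++ w2 ++ w3) (size w1 + x) (size w1 + y).
Proof.
have bounds : size w1 <= size w1 + size w2 <= size (w1 ++ w2 ++ w3).
  by rewrite !size_cat; lia.
by rewrite -{1}(slice_cat3 w1 w2 w3) => /(occurs_slice bounds)[].
Qed.

(* An occurrence at x > 0 lies inside the proper suffix formed by the arrows from x on. *)
Lemma occurs_suffix_free X x y : valid s t X ->
  (forall q, proper_suffix s t q X -> ~ inI s t R q) -> occurs (arrs X) x y -> x = 0.
Proof.
move=> vX free oc; have xy := occurs_lt oc; have yX := oc.1.
case: (posnP x) => // x0; exfalso.
have xX : x <= size (arrs X) by lia.
apply: (free (subpath t X x (size (arrs X)))).
  split.
    move/(congr1 (size \o @arrs V E)) => /=; rewrite size_slice //; lia.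
  exists (subpath t X 0 x); rewrite !valid_subpath //; do !split => //.
    by rewrite /composable tgt_subpath.
  by rewrite qcomp_subpath ?subpath_full ?xX.
apply: (inI_occurs (x := 0) (y := y - x)); first exact: valid_subpath.
by rewrite -(subnn x); apply: slice_occurs.
Qed.

End Occurrences.

Section Factors.
Context {V E : finType} (t : E -> V).
Implicit Types (e u : qpath V E) (us : seq (qpath V E)).

(* The product of a factor list is written right to left: its last factor comes first. *)
Definition word us : seq E := flatten (rev (map (@arrs V E) us)).

Lemma word_cat us1 us2 : word (us1 ++ us2) = word us2 ++ word us1.
Proof. by rewrite /word map_cat rev_cat flatten_cat. Qed.

Lemma word_cons u us : word (u :: us) = word us ++ arrs u.
Proof. by rewrite -cat1s word_cat /word /= cats0. Qed.

Lemma arrs_prodL e us : arrs (prodL e us) = word us ++ arrs e.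
Proof. by elim: us e => [|u us IH] e //=; rewrite IH word_cons -catA. Qed.

(* The factor [nth e us m] occupies the positions [cut us m.+1, cut us m) of [word us]. *)
Definition cut us m := size (word (drop m us)).

Lemma cut0 us : cut us 0 = size (word us).
Proof. by rewrite /cut drop0. Qed.

Lemma cut_size us : cut us (size us) = 0.
Proof. by rewrite /cut drop_size. Qed.

Lemma word_drop us m k : m <= k ->
  word (drop m us) = word (drop k us) ++ word (take (k - m) (drop m us)).
Proof.
move=> mk; rewrite -word_cat -[in LHS](cat_take_drop (k - m) (drop m us)).
by rewrite drop_drop subnK.
Qed.

Lemma slice_word_cut us m k : m <= k ->
  slice (word us) (cut us k) (cut us m) = word (take (k - m) (drop m us)).
Proof.
move=> mk; rewrite /slice /cut -[in X in take _ X](cat_take_drop m us).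
by rewrite word_cat take_size_cat // (word_drop us mk) drop_size_cat.
Qed.

Lemma cut_le us m k : m <= k -> cut us k <= cut us m.
Proof. by move=> mk; rewrite /cut (word_drop us mk) size_cat leq_addr. Qed.

Lemma word_take1 e us m : m < size us ->
  word (take 1 (drop m us)) = arrs (nth e us m).
Proof. by move=> mu; rewrite (drop_nth e mu) /= take0 word_cons. Qed.

Lemma word_take2 e us m : m.+1 < size us ->
  word (take 2 (drop m us)) = arrs (qcomp (nth e us m) (nth e us m.+1)).
Proof.
move=> mu; rewrite (drop_nth e (ltnW mu)) (drop_nth e mu) /= take0.
by rewrite !word_cons.
Qed.

Lemma tgt_prodL u us : chainL t u us -> tgt t (prodL u us) = tgt t u.
Proof. by case: us => [|v us] //= /andP[c _]; apply: tgt_qcomp. Qed.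

Lemma chainL_composable e us m : chainL t e us -> m.+1 < size us ->
  composable t (nth e us m) (nth e us m.+1).
Proof.
elim: us e m => [|u us IH] e m //= /andP[_ ch].
case: m => [|m] /= mu.
  case: us IH ch mu => [|u' us] //= _ /andP[uu' ch'] _.
  by rewrite /composable -(tgt_prodL ch').
have mus : m.+1 < size us by [].
by rewrite !(set_nth_default u) ?(ltnW mus) //; apply: IH.
Qed.

End Factors.

Section LeftAmbiguities.
Context {V E : finType} (s t : E -> V) (R : qpath V E -> Prop).
Hypothesis R_valid : forall r, R r -> valid s t r.
Hypothesis R_nonempty : forall r, R r -> 0 < qlen r.

Lemma leftAmb_cuts N P : leftAmb s t R N P ->
  exists2 A, A 0 = size (arrs P) & ambiguity_cuts (occurs R (arrs P)) N A.
Proof.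
case=> e [us [sz [ch [-> [_ [e0 [u0 [usB usI]]]]]]]].
have -> : arrs (prodL e us) = word us.
  by rewrite arrs_prodL; move/size0nil: e0 => ->; rewrite cats0.
exists (cut us); first exact: cut0.
have cut_bound m : cut us m <= size (word us) by rewrite -cut0 cut_le.
have piece m : m < N -> slice (word us) (cut us m.+1) (cut us m) = arrs (nth e us m).
  by move=> mN; rewrite slice_word_cut // subSnn (word_take1 e) ?sz.
have pair m : m + 2 <= N ->
    slice (word us) (cut us (m + 2)) (cut us m) = arrs (qcomp (nth e us m) (nth e us m.+1)).
  by move=> mN; rewrite slice_word_cut ?leq_addr // addKn (word_take2 e) // sz -addn2.
have valid_pair m : m + 2 <= N -> valid s t (qcomp (nth e us m) (nth e us m.+1)).
  move=> mN; have [|vm _] := usB m; first lia.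
  have [|vm1 _] := usB m.+1; first lia.
  apply: valid_qcomp vm vm1; apply: chainL_composable ch _; rewrite sz; lia.
split.
- by rewrite -sz cut_size.
- move=> N0; have := size_slice (cut us 1) (cut_bound 0).
  by rewrite piece // -/(qlen _) u0 //; have := cut_le us (leq0n 1); lia.
- move=> m mN; have mN1 : m.+1 < N by rewrite -addn2.
  have [/occurs_inI[x [y oc]] free] := usI m mN1.
  move: (oc); rewrite (occurs_suffix_free R_valid R_nonempty (valid_pair m mN) free oc).
  have cuts_ord : cut us (m + 2) <= cut us m <= size (word us).
    by rewrite cut_le ?leq_addr ?cut_bound.
  rewrite -(pair m mN) => /(occurs_slice cuts_ord)[oc' yle].
  by exists (cut us (m + 2) + y); rewrite ?addn0 in oc'.
- move=> m x y mN oc lo hi; have mN1 : m.+1 < N by rewrite -addn2.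
  have [_ free] := usI m mN1.
  have := slice_occurs R_nonempty (cut_bound m) oc (ltnW lo) hi; rewrite pair // => oc'.
  by have := occurs_suffix_free R_valid R_nonempty (valid_pair m mN) free oc'; lia.
- move=> m x y mN oc lo hi.
  have := slice_occurs R_nonempty (cut_bound m) oc lo hi; rewrite piece //.
  exact: inB_occurs (usB m mN).
Qed.

End LeftAmbiguities.

Local Open Scope ring_scope.

Theorem mainTheorem11 (V E : finType) (s t : E -> V) (R : qpath V E -> Prop)
  (hR : monomial_fd s t R) (n : nat) (i j : int)
  (hi : -1 <= i <= n%:Z) (hj : -1 <= j <= n%:Z)
  (p a b c q1 q2 : qpath V E)
  (va : valid s t a) (vb : valid s t b) (vc : valid s t c)
  (vq1 : valid s t q1) (vq2 : valid s t q2)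
  (c1 : composable t q1 a) (c2 : composable t b q1) (c3 : composable t q2 b)
  (c4 : composable t c q2)
  (hp : Gamma s t R n%:Z p) (hq1 : Gamma s t R i q1) (hq2 : Gamma s t R j q2)
  (hdec : p = qcomp c (qcomp q2 (qcomp b (qcomp q1 a)))) :
  i + j <= n%:Z - 1.
Proof.
have R_valid r : R r -> valid s t r by case/(hR.1 r).
have R_nonempty r : R r -> (0 < qlen r)%N by case/(hR.1 r) => _; apply: leq_trans.
have cuts := leftAmb_cuts R_valid R_nonempty.
case: hp => N [eN [/cuts[A A0 Acuts] _]].
case: hq1 => Ni [-> [/cuts[B B0 Bcuts] _]].
case: hq2 => Nj [-> [/cuts[C C0 Ccuts] _]].
suff : (Ni + Nj <= N)%N by move: eN; lia.
have ep : arrs p = arrs a ++ arrs q1 ++ (arrs b ++ arrs q2 ++ arrs c).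
  by rewrite hdec /= -!catA.
have ep' : arrs p = (arrs a ++ arrs q1 ++ arrs b) ++ arrs q2 ++ arrs c.
  by rewrite ep -!catA.
apply: (cuts_nested (occurs_lt R_nonempty (w := arrs p)) Acuts Bcuts Ccuts
          (lo1 := size (arrs a)) (lo2 := size (arrs a ++ arrs q1 ++ arrs b))).
- by move=> x y; rewrite ep; apply: occurs_cat3.
- by move=> x y; rewrite ep'; apply: occurs_cat3.
- by move: eN; lia.
- by rewrite C0 A0 ep' !size_cat; lia.
- by rewrite B0 !size_cat; lia.
Qed.
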